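(* Let $(\mathbb{P},\le,f)$ be a forcing property for $\mathcal{L}_A$. Every condition $p\in\mathbb{P}$ belongs to a generic set.
   Context: $\mathcal{L}$ is a countable continuous signature; formulas of $\mathcal{L}_{\omega_1,\omega}$ are built from atomic formulas using $\neg$, $\tfrac12$, $\dotplus$, countable conjunctions $\bigwedge$ and $\inf_x$. $\mathcal{L}_A$ is a countable fragment, $C=\{c_i:i<\omega\}$ new constants, $\mathcal{L}_A(C)$ the smallest countable fragment of $\mathcal{L}_{\omega_1,\omega}(C)$ containing $\mathcal{L}_A$ (a countable set), $\mathcal{L}_A^s(C)$ its sentences, $\mathcal{L}_A^{as}(C)$ its atomic sentences, $\mathcal{T}(C)$ closed terms. A forcing property $(\mathbb{P},\le,f)$: poset with $f_p\colon\mathcal{L}_A^{as}(C)\to[0,1]$ such that (1) $p\le q\Rightarrow f_p\le f_q$; (2) for every $p$, $\varepsilon>0$, $\tau,\sigma\in\mathcal{T}(C)$, atomic $\varphi(x)$ there are $q\le p$, $c\in C$ with $f_q(d(\tau,c))<\varepsilon$, $f_q(d(\tau,\sigma))<f_p(d(\sigma,\tau))+\varepsilon$, and if $f_p(d(\tau,\sigma))<\delta_{\varphi,x}(\varepsilon)$ then $f_q(\varphi(\sigma))<f_p(\varphi(\tau))+\varepsilon$. $F_p$: $f_p$ on atomics; $F_p(\neg\varphi)=1-\inf_{q\le p}F_q(\varphi)$; $F_p(\tfrac12\varphi)=\tfrac12F_p(\varphi)$; $F_p(\varphi\dotplus\psi)=\min(F_p(\varphi)+F_p(\psi),1)$; $F_p(\bigwedge\Phi)=\inf_{\varphi\in\Phi}F_p(\varphi)$;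 $F_p(\inf_x\varphi)=\inf_{c\in C}F_p(\varphi(c))$. A nonempty $G\subseteq\mathbb{P}$ is generic if it is downward directed (any two elements have a common lower bound in $G$), upward closed, and for every $\varphi\in\mathcal{L}_A^s(C)$ and $r>1$ there is $p\in G$ with $F_p(\varphi)+F_p(\neg\varphi)<r$. *)

From HB Require Import structures.
From mathcomp Require Import all_boot all_order all_algebra.
From mathcomp Require Import boolp classical_sets cardinality reals.

Set Implicit Arguments.
Unset Strict Implicit.
Unset Printing Implicit Defensive.

Import Order.TTheory GRing.Theory Num.Theory.
Local Open Scope classical_set_scope.
Local Open Scope ring_scope.

(* Countable continuous signature: countably many function and predicate    *)
(* symbols with arities (the distance symbol d is built in).                *)
Record signature := Signature {
  fsym : countType ;
  f_arity : fsym -> nat ;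
  rsym : countType ;
  r_arity : rsym -> nat }.

Section Syntax.
Variable L : signature.

(* Terms of L(C): de Bruijn variables, the new constants c_i (i : nat),     *)
(* and applications of function symbols.                                    *)
Inductive term : Type :=
  | Var : nat -> term
  | Cst : nat -> term
  | App (g : fsym L) : ('I_(f_arity g) -> term) -> term.

Inductive atom : Type :=
  | ADist : term -> term -> atom
  | ARel (r : rsym L) : ('I_(r_arity r) -> term) -> atom.

(* Formulas of L_{omega_1,omega}(C): built with neg, 1/2, dotplus,          *)
(* countable conjunctions (of a countable nonempty set, given by an         *)
(* enumeration) and inf_x (de Bruijn: Inf binds variable 0).                *)
Inductive formula : Type :=
  | Atom : atom -> formula
  | Neg : formula -> formula
  | Half : formula -> formula
  | Plus : formula -> formula -> formula
  | Conj : (nat -> formula) -> formula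
  | Inf : formula -> formula.

Fixpoint tsubst (s : nat -> term) (t : term) : term :=
  match t with
  | Var n => s n
  | Cst i => Cst i
  | App g a => App (fun i => tsubst s (a i))
  end.

Definition asubst (s : nat -> term) (a : atom) : atom :=
  match a with
  | ADist t1 t2 => ADist (tsubst s t1) (tsubst s t2)
  | ARel r a => ARel (fun i => tsubst s (a i))
  end.

Definition up (s : nat -> term) : nat -> term :=
  fun n => match n with
           | 0 => Var 0
           | m.+1 => tsubst (fun k => Var k.+1) (s m)
           end.

Fixpoint fsubst (s : nat -> term) (phi : formula) : formula :=
  match phi with
  | Atom a => Atom (asubst s a)
  | Neg psi => Neg (fsubst s psi)
  | Half psi => Half (fsubst s psi)
  | Plus psi chi => Plus (fsubst s psi) (fsubst s chi)
  | Conj Phi => Conj (fun i => fsubst s (Phi i))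
  | Inf psi => Inf (fsubst (up s) psi)
  end.

Definition scons (t : term) (e : nat -> term) : nat -> term :=
  fun n => match n with 0 => t | m.+1 => e m end.

(* phi(t) for phi with the single free variable x = 0 *)
Definition ainst (t : term) (a : atom) : atom := asubst (scons t Var) a.

Fixpoint tfree (x : nat) (t : term) : Prop :=
  match t with
  | Var n => n = x
  | Cst _ => False
  | App g a => exists i, tfree x (a i)
  end.

Definition afree (x : nat) (a : atom) : Prop :=
  match a with
  | ADist t1 t2 => tfree x t1 \/ tfree x t2
  | ARel r a => exists i, tfree x (a i)
  end.

Fixpoint ffree (x : nat) (phi : formula) : Prop :=
  match phi with
  | Atom a => afree x a
  | Neg psi => ffree x psi
  | Half psi => ffree x psi
  | Plus psi chi => ffree x psi \/ ffree x chi
  | Conj Phi => exists i, ffree x (Phi i)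
  | Inf psi => ffree x.+1 psi
  end.

Definition closed_term (t : term) : Prop := forall x, ~ tfree x t.
Definition closed_atom (a : atom) : Prop := forall x, ~ afree x a.
Definition sentence (phi : formula) : Prop := forall x, ~ ffree x phi.

(* No constant from C occurs (i.e. the term/formula belongs to L). *)
Fixpoint tnoC (t : term) : Prop :=
  match t with
  | Var _ => True
  | Cst _ => False
  | App g a => forall i, tnoC (a i)
  end.

Definition anoC (a : atom) : Prop :=
  match a with
  | ADist t1 t2 => tnoC t1 /\ tnoC t2
  | ARel r a => forall i, tnoC (a i)
  end.

Fixpoint fnoC (phi : formula) : Prop :=
  match phi with
  | Atom a => anoC a
  | Neg psi => fnoC psi
  | Half psi => fnoC psi
  | Plus psi chi => fnoC psi /\ fnoC chi
  | Conj Phi => forall i, fnoC (Phi i)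
  | Inf psi => fnoC psi
  end.

(* withC = false : the language L ; withC = true : the language L(C). *)
Definition okt (withC : bool) (t : term) : Prop := if withC then True else tnoC t.
Definition oka (withC : bool) (a : atom) : Prop := if withC then True else anoC a.
Definition okf (withC : bool) (phi : formula) : Prop :=
  if withC then True else fnoC phi.

Definition fragment (withC : bool) (F : set formula) : Prop :=
  [/\ forall phi, F phi ->
        okf withC phi /\ exists n, forall x, ffree x phi -> (x < n)%N,
      forall a, oka withC a -> F (Atom a),
      (forall psi, F (Neg psi) -> F psi) /\ (forall psi, F (Half psi) -> F psi) /\
      (forall psi chi, F (Plus psi chi) -> F psi /\ F chi) /\
      (forall Phi, F (Conj Phi) -> forall i, F (Phi i)) /\
      (forall psi, F (Inf psi) -> F psi),
      (forall psi, F psi -> F (Neg psi)) /\ (forall psi, F psi -> F (Half psi)) /\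
      (forall psi chi, F psi -> F chi -> F (Plus psi chi)) /\
      (forall psi, F psi -> F (Inf psi))
    & forall s phi, (forall n, okt withC (s n)) -> F phi -> F (fsubst s phi)].

Definition LAC (LA : set formula) : set formula :=
  fun phi => forall F, fragment true F -> countable F -> LA `<=` F -> F phi.

End Syntax.

Arguments Var {L}.
Arguments Cst {L}.

Section Forcing.
Variables (R : realType) (L : signature) (P : Type) (le : P -> P -> Prop)
          (f : P -> atom L -> R).

Fixpoint Fv (e : nat -> term L) (phi : formula L) (p : P) : R :=
  match phi with
  | Atom a => f p (asubst e a)
  | Neg psi => 1 - inf [set Fv e psi q | q in [set q | le q p]]
  | Half psi => Fv e psi p / 2
  | Plus psi chi => Num.min (Fv e psi p + Fv e chi p) 1
  | Conj Phi => inf [set Fv e (Phi i) p | i in [set: nat]]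
  | Inf psi => inf [set Fv (scons (Cst c) e) psi p | c in [set: nat]]
  end.

Definition F (p : P) (phi : formula L) : R := Fv Var phi p.

(* Forcing property (P, <=, f); delta a eps is the modulus delta_{phi,x}(eps) *)
(* of the atomic formula a = phi(x) (x = de Bruijn variable 0).              *)
Definition forcing_property (delta : atom L -> R -> R) : Prop :=
  [/\ (forall p, le p p) /\ (forall p q r, le p q -> le q r -> le p r) /\
      (forall p q, le p q -> le q p -> p = q),
      forall p a, closed_atom a -> 0 <= f p a <= 1,
      forall p q a, closed_atom a -> le p q -> f p a <= f q a
    & forall p (eps : R) (tau sigma : term L) (a : atom L),
        0 < eps -> closed_term tau -> closed_term sigma ->
        (forall x, afree x a -> x = 0%N) ->
        exists q c, [/\ le q p,
          f q (ADist tau (Cst c)) < eps,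
          f q (ADist tau sigma) < f p (ADist sigma tau) + eps
        & f p (ADist tau sigma) < delta a eps ->
          f q (ainst sigma a) < f p (ainst tau a) + eps]].

Definition generic (LA : set (formula L)) (G : set P) : Prop :=
  [/\ G !=set0,
      forall p q, G p -> G q -> exists2 r, G r & le r p /\ le r q,
      forall p q, G p -> le p q -> G q
    & forall (phi : formula L) (r : R), LAC LA phi -> sentence phi -> 1 < r ->
        exists2 p, G p & F p phi + F p (Neg phi) < r].

End Forcing.

From HB Require Import structures.
From mathcomp Require Import all_boot all_order all_algebra.
From mathcomp Require Import boolp classical_sets cardinality reals.
From mathcomp Require Import lra.

(* First, L_A(C) is countable: the closure of L_A and the
   atomic formulas of L(C) under the fragment operations (connectives, inf,
   subformulas, substitution of finitely many closed terms) is built in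
   countably many countable stages, and is itself a countable fragment.
   Second, each pair (phi, eps) is met densely: a condition r below q whose
   value F_r(phi) lies within eps of inf_{r' <= q} F_r'(phi) has
   F_r(~phi) <= 1 - that infimum, so F_r(phi) + F_r(~phi) < 1 + eps.
   A Rasiowa-Sikorski chain below p meeting the countably many requirements
   (phi, 1/(k+1)) generates the generic set. *)

Set Implicit Arguments.
Unset Strict Implicit.
Unset Printing Implicit Defensive.

Import Order.TTheory GRing.Theory Num.Theory.
Local Open Scope classical_set_scope.

Section Countability.
Variable L : signature.

Fixpoint tree_of_term (t : term L) : GenTree.tree nat :=
  match t with
  | Var n => GenTree.Node 0 [:: GenTree.Leaf n]
  | Cst n => GenTree.Node 1 [:: GenTree.Leaf n]
  | App g a => GenTree.Node 2 (GenTree.Leaf (pickle g) ::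
                 [seq tree_of_term (a i) | i <- enum 'I_(f_arity g)])
  end.

Fixpoint term_of_tree (c : GenTree.tree nat) : option (term L) :=
  match c with
  | GenTree.Node 0 [:: GenTree.Leaf n] => Some (Var n)
  | GenTree.Node 1 [:: GenTree.Leaf n] => Some (Cst n)
  | GenTree.Node 2 (GenTree.Leaf k :: cs) =>
      if unpickle k is Some g then
        let ts := map term_of_tree cs in
        Some (App (fun i : 'I_(f_arity g) => odflt (Var 0) (nth None ts i)))
      else None
  | _ => None
  end.

Lemma tree_of_termK : pcancel tree_of_term term_of_tree.
Proof.
elim=> [n|n|g a IH] //=; rewrite pickleK; congr (Some (App _)); apply: funext => i.
rewrite -map_comp (eq_map (g := Some \o a)) => [|j]; last by rewrite /= IH.
by rewrite (nth_map i) ?size_enum_ord // nth_ord_enum.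
Qed.

HB.instance Definition _ := Countable.copy (term L) (pcan_type tree_of_termK).

Definition tree_of_atom (x : atom L) : GenTree.tree (term L + rsym L) :=
  match x with
  | ADist t1 t2 => GenTree.Node 0 [:: GenTree.Leaf (inl t1); GenTree.Leaf (inl t2)]
  | ARel r a => GenTree.Node 1 (GenTree.Leaf (inr r) ::
                 [seq GenTree.Leaf (inl (a i)) | i <- enum 'I_(r_arity r)])
  end.

Definition term_of_leaf (c : GenTree.tree (term L + rsym L)) : term L :=
  if c is GenTree.Leaf (inl t) then t else Var 0.

Definition atom_of_tree (c : GenTree.tree (term L + rsym L)) : option (atom L) :=
  match c with
  | GenTree.Node 0 [:: GenTree.Leaf (inl t1); GenTree.Leaf (inl t2)] =>
      Some (ADist t1 t2)
  | GenTree.Node 1 (GenTree.Leaf (inr r) :: cs) =>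
      Some (ARel (fun i : 'I_(r_arity r) =>
              term_of_leaf (nth (GenTree.Leaf (inl (Var 0))) cs i)))
  | _ => None
  end.

Lemma tree_of_atomK : pcancel tree_of_atom atom_of_tree.
Proof.
case=> [t1 t2|r a] //=; congr (Some (ARel _)); apply: funext => i.
by rewrite (nth_map i) ?size_enum_ord // nth_ord_enum.
Qed.

HB.instance Definition _ := Countable.copy (atom L) (pcan_type tree_of_atomK).

End Countability.

Lemma countableU T (A B : set T) : countable A -> countable B -> countable (A `|` B).
Proof.
move=> cA cB; have -> : A `|` B = \bigcup_(b in [set: bool]) (if b then A else B).
  by apply/seteqP; split=> x; [case=> ?; [exists true|exists false]|case=> -[] _ ?; [left|right]].
by apply: bigcup_countable => // -[].
Qed.

Section FreeVariables.
Variable L : signature.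
Implicit Types (t : term L) (phi : formula L) (s : nat -> term L).

Definition bounded_vars (fv : nat -> Prop) := exists n, forall x, fv x -> (x < n)%N.

Lemma tsubst_ext t s s' :
  (forall x, tfree x t -> s x = s' x) -> tsubst s t = tsubst s' t.
Proof.
elim: t => [n|n|g a IH] /= eq_s //; first exact: eq_s.
by congr App; apply: funext => i; apply: IH => x fx; apply: eq_s; exists i.
Qed.

Lemma fsubst_ext phi s s' :
  (forall x, ffree x phi -> s x = s' x) -> fsubst s phi = fsubst s' phi.
Proof.
elim: phi s s' => [[t1 t2|r a]|psi IH|psi IH|psi IH chi IH'|Phi IH|psi IH] s s' /= eq_s.
- by rewrite (tsubst_ext (s' := s')) ?(tsubst_ext (s' := s')) // => x fx; apply: eq_s; [right|left].
- by congr (Atom (ARel _)); apply: funext => i; apply: tsubst_ext => x fx; apply: eq_s; exists i.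
- by rewrite (IH _ s').
- by rewrite (IH _ s').
- by rewrite (IH _ s') ?(IH' _ s') // => x fx; apply: eq_s; [right|left].
- by congr Conj; apply: funext => i; apply: IH => x fx; apply: eq_s; exists i.
- by congr Inf; apply: IH => -[|x] //= fx; rewrite eq_s.
Qed.

Lemma tfree_tsubst x t s :
  tfree x (tsubst s t) -> exists2 y, tfree y t & tfree x (s y).
Proof.
elim: t => [n|n|g a IH] //= => [fx|[i /IH [y fy fx]]]; first by exists n.
by exists y => //; exists i.
Qed.

Lemma ffree_fsubst x phi s :
  ffree x (fsubst s phi) -> exists2 y, ffree y phi & tfree x (s y).
Proof.
elim: phi x s => [[t1 t2|r a]|psi IH|psi IH|psi IH chi IH'|Phi IH|psi IH] x s /=.
- by case=> /tfree_tsubst [y fy fx]; exists y => //; [left|right].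
- by case=> i /tfree_tsubst [y fy fx]; exists y => //; exists i.
- exact: IH.
- exact: IH.
- by case=> [/IH|/IH'] [y fy fx]; exists y => //; [left|right].
- by case=> i /IH [y fy fx]; exists y => //; exists i.
- by case/IH => -[|y] //= fy /tfree_tsubst [z fz /= [<-]]; exists y.
Qed.

Lemma bounded_tfree t : bounded_vars (fun x => tfree x t).
Proof.
elim: t => [n|n|g a IH]; [by exists n.+1 => x /= ->|by exists 0%N|].
have [N bN] := choice IH; exists (\max_i N i) => x [i /bN lt_x].
exact: leq_trans lt_x (leq_bigmax i).
Qed.

Lemma bounded_afree (a : atom L) : bounded_vars (fun x => afree x a).
Proof.
case: a => [t1 t2|r a] /=.
  have [[n1 b1] [n2 b2]] := (bounded_tfree t1, bounded_tfree t2).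
  by exists (maxn n1 n2) => x [/b1|/b2] lt_x; rewrite leq_max lt_x ?orbT.
have [N bN] := choice (fun i => bounded_tfree (a i)).
exists (\max_i N i) => x [i /bN lt_x]; exact: leq_trans lt_x (leq_bigmax i).
Qed.

Lemma bounded_tfree_seq (l : seq (term L)) :
  bounded_vars (fun x => exists2 t, t \in l & tfree x t).
Proof.
elim: l => [|t l [n bl]]; first by exists 0%N => x [].
have [m bt] := bounded_tfree t.
exists (maxn m n) => x [u]; rewrite in_cons => /predU1P [-> /bt|lu fx].
  by rewrite leq_max => ->.
by rewrite leq_max (bl x) ?orbT //; exists u.
Qed.

Definition subst_of_seq (l : seq (term L)) (n : nat) : term L := nth (Var n) l n.

Lemma bounded_ffree_subst_of_seq phi l : bounded_vars (fun x => ffree x phi) ->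
  bounded_vars (fun x => ffree x (fsubst (subst_of_seq l) phi)).
Proof.
move=> [n bphi]; have [m bl] := bounded_tfree_seq l.
exists (maxn m n) => x /ffree_fsubst [y fy]; rewrite /subst_of_seq leq_max.
have [lt_y fx|le_y] := ltnP y (size l).
  by rewrite bl //; exists (nth (Var y) l y) => //; exact: mem_nth.
by rewrite nth_default //= => <-; rewrite bphi ?orbT.
Qed.

End FreeVariables.

Section CountableFragment.
Variables (L : signature) (LA : set (formula L)).
Implicit Types (phi psi : formula L).

Definition subformula_at phi (i : nat) : formula L :=
  match phi with
  | Atom _ => phi
  | Neg psi | Half psi | Inf psi => psi
  | Plus psi chi => if i is 0 then psi else chi
  | Conj Phi => Phi i
  end.

(* The operations a fragment of L(C) is closed under, indexed by a tag;
   tag 0 is the identity, which makes the stages below increasing. *)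
Definition fragment_op (x : formula L * formula L * nat * seq (term L)) : formula L :=
  let: (phi, psi, n, l) := x in
  match n with
  | 0 => phi
  | 1 => Neg phi
  | 2 => Half phi
  | 3 => Plus phi psi
  | 4 => Inf phi
  | 5 => fsubst (subst_of_seq l) phi
  | k.+1.+1.+1.+1.+1.+1 => subformula_at phi k
  end.

Fixpoint fragment_stage (k : nat) : set (formula L) :=
  if k is k'.+1 then
    fragment_op @` (fragment_stage k' `*` fragment_stage k' `*` [set: nat] `*` [set: seq (term L)])
  else LA `|` range (@Atom L).

Definition fragment_closure : set (formula L) := \bigcup_(k in [set: nat]) fragment_stage k.

Lemma countable_fragment_closure : countable LA -> countable fragment_closure.
Proof.
move=> cLA; apply: bigcup_countable => // k _; elim: k => [|k ck] /=.
  exact: countableU cLA (sub_countable (card_image_le _ _) (countableP [set: atom L])).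
by apply: sub_countable (card_image_le _ _) _; rewrite !countableX.
Qed.

Lemma fragment_stage_mono k m : (k <= m)%N -> fragment_stage k `<=` fragment_stage m.
Proof.
elim: m => [|m IH]; first by rewrite leqn0 => /eqP ->.
rewrite leq_eqVlt ltnS => /predU1P [-> //|/IH le_km phi /le_km sphi].
by exists (phi, phi, 0%N, [::]).
Qed.

Lemma fragment_closure_op phi psi n l : fragment_closure phi -> fragment_closure psi ->
  fragment_closure (fragment_op (phi, psi, n, l)).
Proof.
move=> [k _ sphi] [m _ spsi]; exists (maxn k m).+1 => //.
exists (phi, psi, n, l) => //; do !split => //.
  exact: fragment_stage_mono (leq_maxl k m) _ sphi.
exact: fragment_stage_mono (leq_maxr k m) _ spsi.
Qed.

Let bounded phi := bounded_vars (fun x => ffree x phi).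

Lemma bounded_subformula_at phi i : bounded phi -> bounded (subformula_at phi i).
Proof.
case: phi => [a|psi|psi|psi chi|Phi|psi] [n bn] //=; try by exists n.
- by case: i; exists n => x fx; apply: bn; [left|right].
- by exists n => x fx; apply: bn; exists i.
- by exists n.+1 => -[|x] // /bn.
Qed.

Lemma bounded_fragment_op phi psi n l : bounded phi -> bounded psi ->
  bounded (fragment_op (phi, psi, n, l)).
Proof.
move=> bphi [b bb]; have [a ba] := bphi; case: n => [|[|[|[|[|[|k]]]]]] /=; try by exists a.
- by exists (maxn a b) => x [/ba|/bb] lt_x; rewrite leq_max lt_x ?orbT.
- by exists a => x /ba /ltnW.
- exact: bounded_ffree_subst_of_seq.
- exact: bounded_subformula_at.
Qed.

Hypothesis LA_bounded : forall phi, LA phi -> bounded phi.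

Lemma bounded_fragment_closure phi : fragment_closure phi -> bounded phi.
Proof.
move=> [k _]; elim: k phi => [|k IH] phi /=.
  by case=> [/LA_bounded|[a _ <-]] //; exact: bounded_afree.
by case=> -[[[psi chi] n] l] [[[/IH bpsi /IH bchi] _] _] <-; exact: bounded_fragment_op.
Qed.

Lemma fragment_closure_fragment : fragment true fragment_closure.
Proof.
have op1 phi n : fragment_closure phi -> fragment_closure (fragment_op (phi, phi, n, [::])).
  by move=> Fphi; exact: fragment_closure_op.
have sub i phi : fragment_closure phi -> fragment_closure (subformula_at phi i).
  exact: (op1 _ i.+1.+1.+1.+1.+1.+1).
split.
- by move=> phi /bounded_fragment_closure.
- by move=> a _; exists 0%N => //; right; exists a.
- split; [|split; [|split; [|split]]].
  + by move=> psi /(sub 0%N).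
  + by move=> psi /(sub 0%N).
  + by move=> psi chi Fphi; split; [exact: (sub 0%N _ Fphi)|exact: (sub 1%N _ Fphi)].
  + by move=> Phi Fphi i; exact: (sub i _ Fphi).
  + by move=> psi /(sub 0%N).
- split; [|split; [|split]];
    [by move=> psi /(op1 _ 1%N)|by move=> psi /(op1 _ 2%N)| |by move=> psi /(op1 _ 4%N)].
  by move=> psi chi Fpsi Fchi; move: (fragment_closure_op 3%N [::] Fpsi Fchi).
- move=> s phi _ Fphi; have [n bn] := bounded_fragment_closure Fphi.
  rewrite -(@fsubst_ext _ phi (subst_of_seq (mkseq s n))); last first.
    by move=> x /bn lt_x; rewrite /subst_of_seq nth_mkseq.
  by move: (fragment_closure_op 5%N (mkseq s n) Fphi Fphi).
Qed.

End CountableFragment.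

Lemma countable_LAC (L : signature) (LA : set (formula L)) :
  fragment false LA -> countable LA -> countable (LAC LA).
Proof.
move=> [LA_bounded _ _ _ _] cLA; apply: sub_countable (countable_fragment_closure cLA).
apply: subset_card_le => phi; apply.
- by apply: fragment_closure_fragment => psi /LA_bounded [].
- exact: countable_fragment_closure.
- by move=> psi LApsi; exists 0%N => //; left.
Qed.

Section RasiowaSikorski.
Variables (P : Type) (le : P -> P -> Prop).
Hypothesis le_refl : forall p, le p p.
Hypothesis le_trans : forall p q r, le p q -> le q r -> le p r.

Definition is_filter (G : set P) :=
  [/\ G !=set0,
      forall p q, G p -> G q -> exists2 r, G r & le r p /\ le r q
    & forall p q, G p -> le p q -> G q].

Lemma filter_of_chain (c : nat -> P) : (forall n, le (c n.+1) (c n)) ->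
  is_filter [set q | exists n, le (c n) q].
Proof.
move=> c_dec; have c_le m n : (n <= m)%N -> le (c m) (c n).
  elim: m => [|m IH]; first by rewrite leqn0 => /eqP ->.
  by rewrite leq_eqVlt ltnS => /predU1P [-> //|/IH]; apply: le_trans.
split; first by exists (c 0%N), 0%N.
- move=> p q [m cp] [n cq]; exists (c (maxn m n)); first by exists (maxn m n).
  by split; apply: le_trans (c_le _ _ _) _; [exact: leq_maxl|exact: cp|exact: leq_maxr|exact: cq].
- by move=> p q [n cp] pq; exists n; exact: le_trans pq.
Qed.

Lemma rasiowa_sikorski (I : Type) (J : set I) (D : I -> set P) :
  countable J -> (forall i q, J i -> exists2 r, le r q & D i r) ->
  forall p, exists G, [/\ is_filter G, G p & forall i, J i -> exists2 q, G q & D i q].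
Proof.
move=> /countable_injP [code code_inj] D_dense p.
(* Step [n] of the chain serves the requirement coded by [n], if there is one. *)
have /choice [next nextP] : forall nq : nat * P,
    exists r, le r nq.2 /\ forall i, J i -> code i = nq.1 -> D i r.
  move=> [n q]; have [[i [Ji <-]]|no_i] := pselect (exists i, J i /\ code i = n).
    have [r rq Dr] := D_dense i q Ji; exists r; split => // j Jj /code_inj eq_ji.
    by rewrite eq_ji ?inE.
  by exists q; split => // i Ji ci; case: no_i; exists i.
pose fix c n := if n is m.+1 then next (m, c m) else p.
exists [set q | exists n, le (c n) q]; split.
- by apply: filter_of_chain => n; exact: (nextP (n, c n)).1.
- by exists 0%N.
- move=> i Ji; exists (c (code i).+1); first by exists (code i).+1.
  exact: (nextP (code i, c (code i))).2.
Qed.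

End RasiowaSikorski.

Local Open Scope ring_scope.

Section Deciding.
Variables (R : realType) (L : signature) (P : Type) (le : P -> P -> Prop)
          (f : P -> atom L -> R).
Hypothesis le_refl : forall p, le p p.
Hypothesis le_trans : forall p q r, le p q -> le q r -> le p r.
Implicit Types (phi : formula L) (p q r : P).

Definition values_below q phi := [set F le f r phi | r in [set r | le r q]].

Lemma F_Neg q phi : F le f q (Neg phi) = 1 - inf (values_below q phi).
Proof. by []. Qed.

Lemma F_Neg_le r q phi : le r q -> has_inf (values_below q phi) ->
  F le f r (Neg phi) <= 1 - inf (values_below q phi).
Proof.
move=> rq [_ lb]; rewrite F_Neg lerD2l lerN2; apply: lb_le_inf; first by exists (F le f r phi), r.
by move=> _ [s sr <-]; apply: ge_inf lb _ _; exists s => //; exact: le_trans sr rq.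
Qed.

Lemma F_Neg_out q phi : ~ has_inf (values_below q phi) -> F le f q (Neg phi) = 1.
Proof. by move=> no_inf; rewrite F_Neg inf_out // subr0. Qed.

Lemma decide_below_inf q phi eps : 0 < eps -> has_inf (values_below q phi) ->
  exists2 r, le r q & F le f r phi + F le f r (Neg phi) < 1 + eps.
Proof.
move=> eps_gt0 hinf; have [_ [r rq <-] near_inf] := inf_adherent eps_gt0 hinf.
by exists r => //; have := F_Neg_le rq hinf; lra.
Qed.

(* If the values of [phi] below [p] are unbounded below, first pass to some [q]
   with a negative value; if even below [q] they have no infimum, [F q (Neg phi)]
   is the junk value [1 - inf set = 1 - 0]. *)
Lemma decide_dense p phi eps : 0 < eps ->
  exists2 r, le r p & F le f r phi + F le f r (Neg phi) < 1 + eps.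
Proof.
move=> eps_gt0.
have [/(decide_below_inf eps_gt0)//|unbounded] := pselect (has_inf (values_below p phi)).
have [_ [q qp <-] Fq_lt0] : exists2 y, values_below p phi y & y < 0.
  by apply: (has_infPn _).1 unbounded 0; exists (F le f p phi), p.
have [/(decide_below_inf eps_gt0) [r rq decided]|no_inf] :=
  pselect (has_inf (values_below q phi)).
  by exists r => //; exact: le_trans rq qp.
by exists q => //; rewrite F_Neg_out //; lra.
Qed.

End Deciding.

Theorem proposition2p12 (R : realType) (L : signature) (LA : set (formula L))
    (delta : atom L -> R -> R) (P : Type) (le : P -> P -> Prop)
    (f : P -> atom L -> R) :
  fragment false LA -> countable LA ->
  (forall a eps, 0 < eps -> 0 < delta a eps) ->
  forcing_property le f delta ->
  forall p : P, exists G : set P, generic le f LA G /\ G p.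
Proof.
move=> LA_fragment cLA _ [[le_refl [le_trans _]] _ _ _] p.
pose decided (x : formula L * nat) r :=
  F le f r x.1 + F le f r (Neg x.1) < 1 + x.2.+1%:R^-1.
have cJ : countable (LAC LA `*` [set: nat]).
  exact: countableX (countable_LAC LA_fragment cLA) (countableP _).
have [|G [[G_ne G_directed G_up] Gp G_decides]] :=
  rasiowa_sikorski le_refl le_trans cJ (D := decided) ^~ p.
  by move=> [phi k] q _; apply: decide_dense => //; rewrite invr_gt0 ltr0Sn.
exists G; split => //; split => // phi r LAC_phi _ r_gt1.
have [k tol_lt] := ltr_add_invr r_gt1.
have [q Gq decided_q] := G_decides (phi, k) (conj LAC_phi I).
by exists q => //; exact: lt_trans decided_q tol_lt.
Qed.
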